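(* Let $I$ be a finite tree, $I=I^+\sqcup I^-$ its bipartition, $\Gamma_0$ the alternating orientation in which every vertex of $I^+$ is a source, $\Sigma_+=\prod_{i\in I^+}\Sigma_i$ and $\Sigma_-=\prod_{i\in I^-}\Sigma_i$ (each regarded as a morphism $\Gamma_0\to\Gamma_0^{\mathrm{op}}$ or $\Gamma_0^{\mathrm{op}}\to\Gamma_0$, as composability requires). Then: (a) the automorphism group $\mathrm{Aut}_{R_0(I)}(\Gamma_0)$ is generated by $\Sigma_+\Sigma_-$ and $\Sigma_-\Sigma_+$; (b) the automorphism group $\mathrm{Aut}_{R(I)}(\Gamma_0)$ is generated by $D\Sigma_+$ and $D\Sigma_-$.
   Context: Let $I$ be a finite tree (connected, acyclic finite graph). $\mathrm{Quiv}(I)$ is the set of orientations of $I$. For $\Gamma\in\mathrm{Quiv}(I)$ and a vertex $i$ that is a source or sink of $\Gamma$, $s_i\Gamma$ is the orientation obtained by reversing all arrows at $i$; $\Gamma^{\mathrm{op}}$ is obtained by reversing all arrows. The groupoid $R_0(I)$ has object set $\mathrm{Quiv}(I)$ and is generated by elementary isomorphisms $\Sigma_i:\Gamma\to s_i\Gamma$ (one for each $\Gamma$ and each source or sink $i$ of $\Gamma$), subject to the relations (whenever both sides are defined): (R1) $\Sigma_i^2=1$; (R2) $\Sigma_i\Sigma_j=\Sigma_j\Sigma_i$ whenever $i,j$ are not adjacent in $I$. The groupoid $R(I)$ has the same objects and is generated by the $\Sigma_i$ together with elementary isomorphisms $D:\Gamma\to\Gamma^{\mathrm{op}}$ for all $\Gamma$,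 subject to (R1), (R2) and (R3) $D^2=1$, (R4) $D\Sigma_i=\Sigma_iD$ for all $i$ (whenever defined). Composition is written right-to-left (in $\Sigma_i\Sigma_j$, $\Sigma_j$ is applied first). $I=I^+\sqcup I^-$ is a decomposition into two subsets with no edges inside either subset (unique up to swapping). Products $\Sigma_\pm$ are independent of the order by (R2). *)

From mathcomp Require Import all_boot.
From Stdlib Require Relation_Definitions Relation_Operators.
Set Implicit Arguments. Unset Strict Implicit. Unset Printing Implicit Defensive.

Section Reflection.
Variables (V : finType) (e : rel V).

Definition is_tree : Prop :=
  [/\ symmetric e, irreflexive e, (forall x y, connect e x y) &
      (forall p : seq V, uniq p -> 3 <= size p -> ~~ cycle e p)].

Definition is_bipartition (Ip : {set V}) : Prop :=
  forall x y, e x y -> (x \in Ip) != (y \in Ip).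

(* An orientation is a set of arrows (x,y) meaning x -> y. *)
Definition is_orientation (A : {set V * V}) : Prop :=
  (forall p, p \in A -> e p.1 p.2) /\
  (forall x y, e x y -> ((x, y) \in A) != ((y, x) \in A)).

Definition is_source (i : V) (A : {set V * V}) : bool :=
  [forall y, e i y ==> ((i, y) \in A)].
Definition is_sink (i : V) (A : {set V * V}) : bool :=
  [forall y, e i y ==> ((y, i) \in A)].

Definition sref (i : V) (A : {set V * V}) : {set V * V} :=
  [set p | if (p.1 == i) || (p.2 == i) then (p.2, p.1) \in A else p \in A].
Definition opp (A : {set V * V}) : {set V * V} := [set p | (p.2, p.1) \in A].

Definition Gamma0 (Ip : {set V}) : {set V * V} :=
  [set p | e p.1 p.2 && (p.1 \in Ip)].

Inductive gen := Sig of V | Dg.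

(* a letter is a generator together with a flag "formal inverse" *)
Definition letter := (gen * bool)%type.

Definition gstep (A : {set V * V}) (g : gen) : {set V * V} :=
  match g with Sig i => sref i A | Dg => opp A end.

(* wD = true : groupoid R(I) (D allowed);  wD = false : groupoid R_0(I) *)
Definition gdef (wD : bool) (A : {set V * V}) (g : gen) : bool :=
  match g with Sig i => is_source i A || is_sink i A | Dg => wD end.

(* the letter (g,false) at A is the generator g : A -> gstep A g;
   the letter (g,true) at A is the inverse of the generator g : gstep A g -> A
   (note gstep (gstep A g) g = A). *)
Definition ldef (wD : bool) (A : {set V * V}) (l : letter) : bool :=
  if l.2 then gdef wD (gstep A l.1) l.1 else gdef wD A l.1.

(* words are listed in order of application (first letter applied first) *)
Fixpoint valid (wD : bool) (A : {set V * V}) (w : seq letter) : bool :=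
  if w is l :: w' then ldef wD A l && valid wD (gstep A l.1) w' else true.

Fixpoint endpt (A : {set V * V}) (w : seq letter) : {set V * V} :=
  if w is l :: w' then endpt (gstep A l.1) w' else A.

Inductive rel_at (wD : bool) (A : {set V * V}) : seq letter -> seq letter -> Prop :=
  | RinvR g : valid wD A [:: (g, false); (g, true)] ->
      rel_at wD A [:: (g, false); (g, true)] [::]
  | RinvL g : valid wD A [:: (g, true); (g, false)] ->
      rel_at wD A [:: (g, true); (g, false)] [::]
  | R1 i : valid wD A [:: (Sig i, false); (Sig i, false)] ->
      rel_at wD A [:: (Sig i, false); (Sig i, false)] [::]
  | R2 i j : ~~ e i j ->
      valid wD A [:: (Sig j, false); (Sig i, false)] ->
      valid wD A [:: (Sig i, false); (Sig j, false)] ->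
      rel_at wD A [:: (Sig j, false); (Sig i, false)] [:: (Sig i, false); (Sig j, false)]
  | R3 : wD -> valid wD A [:: (Dg, false); (Dg, false)] ->
      rel_at wD A [:: (Dg, false); (Dg, false)] [::]
  | R4 i : wD ->
      valid wD A [:: (Sig i, false); (Dg, false)] ->
      valid wD A [:: (Dg, false); (Sig i, false)] ->
      rel_at wD A [:: (Sig i, false); (Dg, false)] [:: (Dg, false); (Sig i, false)].

Definition rw_step (wD : bool) (A : {set V * V}) (w w' : seq letter) : Prop :=
  exists u v l r, [/\ w = u ++ l ++ v, w' = u ++ r ++ v,
     valid wD A w, valid wD A w' & rel_at wD (endpt A u) l r].

(* equality of morphisms out of A in the presented groupoid *)
Definition weq (wD : bool) (A : {set V * V}) : Relation_Definitions.relation (seq letter) :=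
  Relation_Operators.clos_refl_sym_trans _ (rw_step wD A).

Definition winv (w : seq letter) : seq letter :=
  rev (map (fun l => (l.1, ~~ l.2)) w).

(* the subgroup of Aut(A) generated by (the classes of) loops a and b contains w *)
Definition in_gen2 (wD : bool) (A : {set V * V}) (a b w : seq letter) : Prop :=
  exists bs : seq (bool * bool),
    weq wD A w (flatten (map (fun c => let x := if c.1 then a else b in
                                       if c.2 then winv x else x) bs)).

Definition SigmaW (S : {set V}) : seq letter := [seq (Sig i, false) | i <- enum S].

End Reflection.

From mathcomp Require Import all_boot order ssralg ssrnum ssrint zify.
From Stdlib Require Relation_Definitions Relation_Operators.
Import Relation_Operators Order.TTheory GRing.Theory Num.Theory.
Set Implicit Arguments. Unset Strict Implicit. Unset Printing Implicit Defensive.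

(* Orientations reachable from Gamma0 are encoded by height functions
   h : V -> int that change by exactly 1 along every edge, arrows pointing
   downhill; reflecting at a sink adds 2 to its height, at a source subtracts 2.
   Two Sigma-words out of the same orientation that end at the same height
   function are equal modulo (R1) and (R2).  Indeed, in a loop a rise at i
   immediately followed by a descent at j forces i = j (cancel by R1) or i, j
   non-adjacent (commute by R2, lowering the intermediate heights), and a loop
   without such a peak can be rotated into one with a peak; induction on the
   length and the total height traversed reduces every loop to the empty word.
   On a tree, a loop at Gamma0 shifts all heights by a common even constant
   2k, which is also realized by k blocks Sigma_- Sigma_+ (k >= 0) or by -k
   blocks Sigma_+ Sigma_- (k < 0), words being read in order of application:
   this is (a).  In R(I), D commutes with every Sigma_i and is an involution,
   so a loop is a Sigma-word followed by D or not; inserting D^2 between the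
   two halves of each block rewrites it as a product of D Sigma_+ and
   D Sigma_-, and an odd loop through Gamma0^op is closed up by Sigma_+. *)

Section WordCalculus.
Variables (V : finType) (e : rel V).
Implicit Types (i j : V) (A : {set V * V}) (g : gen V) (wD : bool).
Implicit Types (u v w t l r : seq (letter V)).

Lemma srefK i : involutive (sref i).
Proof.
move=> A; apply/setP=> [[x y]]; rewrite !inE /=.
by case: (x == i) (y == i) => [] [] //=; rewrite orbC.
Qed.

Lemma oppK : involutive (@opp V).
Proof. by move=> A; apply/setP=> [[x y]]; rewrite !inE. Qed.

Lemma gstepK g : involutive (fun A => gstep A g).
Proof. by case: g => [i|] A /=; rewrite ?srefK ?oppK. Qed.

Lemma srefC i j A : sref i (sref j A) = sref j (sref i A).
Proof.
apply/setP=> [[x y]]; rewrite !inE /=.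
by case: (x == i) (y == i) (x == j) (y == j) => [] [] [] [].
Qed.

Lemma sref_opp i A : sref i (opp A) = opp (sref i A).
Proof.
apply/setP=> [[x y]]; rewrite !inE /=.
by case: (x == i) (y == i) => [] [] /=; rewrite ?orbT ?orbF.
Qed.

Lemma is_source_sref i A : is_source e i (sref i A) = is_sink e i A.
Proof. by apply/forallP/forallP=> H y; move: (H y); rewrite !inE /= eqxx ?orbT. Qed.

Lemma is_sink_sref i A : is_sink e i (sref i A) = is_source e i A.
Proof. by apply/forallP/forallP=> H y; move: (H y); rewrite !inE /= eqxx ?orbT. Qed.

Lemma is_source_opp i A : is_source e i (opp A) = is_sink e i A.
Proof. by apply/forallP/forallP=> H y; move: (H y); rewrite !inE. Qed.

Lemma is_sink_opp i A : is_sink e i (opp A) = is_source e i A.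
Proof. by apply/forallP/forallP=> H y; move: (H y); rewrite !inE. Qed.

Lemma gdef_gstep wD A g : gdef e wD (gstep A g) g = gdef e wD A g.
Proof. by case: g => [i|] //=; rewrite is_source_sref is_sink_sref orbC. Qed.

Lemma valid_cat wD A u w :
  valid e wD A (u ++ w) = valid e wD A u && valid e wD (endpt A u) w.
Proof. by elim: u A => [|l u IH] A //=; rewrite IH andbA. Qed.

Lemma endpt_cat A u w : endpt A (u ++ w) = endpt (endpt A u) w.
Proof. by elim: u A => [|l u IH] A //=. Qed.

Lemma rel_at_valid wD A l r : rel_at e wD A l r -> valid e wD A l /\ valid e wD A r.
Proof. by case. Qed.

Lemma rel_at_endpt wD A l r : rel_at e wD A l r -> endpt A l = endpt A r.
Proof. by case=> /= *; rewrite ?gstepK ?srefK ?oppK ?sref_opp // srefC. Qed.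

Lemma weq_valid_endpt wD A w w' : weq e wD A w w' ->
  valid e wD A w = valid e wD A w' /\ endpt A w = endpt A w'.
Proof.
elim=> [_ _ [u [v [l [r [-> -> Vl Vr Hlr]]]]]|//|_ _ _ [-> ->]|_ _ _ _ [-> ->] _ [-> ->]] //.
by rewrite Vl Vr !endpt_cat (rel_at_endpt Hlr).
Qed.

Lemma weq_refl wD A w : weq e wD A w w.
Proof. exact: rst_refl. Qed.

Lemma weq_sym wD A w w' : weq e wD A w w' -> weq e wD A w' w.
Proof. exact: rst_sym. Qed.

Lemma weq_trans wD A w1 w2 w3 :
  weq e wD A w1 w2 -> weq e wD A w2 w3 -> weq e wD A w1 w3.
Proof. exact: rst_trans. Qed.

Lemma valid_weq_cat wD A u v v' t : weq e wD (endpt A u) v v' ->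
  valid e wD A (u ++ v ++ t) = valid e wD A (u ++ v' ++ t).
Proof. by case/weq_valid_endpt=> Vv Ev; rewrite !valid_cat Vv Ev. Qed.

Lemma weq_congr wD A u v v' t : weq e wD (endpt A u) v v' ->
  valid e wD A (u ++ v ++ t) -> weq e wD A (u ++ v ++ t) (u ++ v' ++ t).
Proof.
elim=> [x y Hxy Vx|x _|x y Wxy IH Vy|x y z Wxy IH1 _ IH2 Vx].
- have Vy := Vx; rewrite (valid_weq_cat _ (rst_step _ _ _ _ Hxy)) in Vy.
  case: Hxy Vx Vy => [u1 [v1 [l [r [-> -> _ _ Hlr]]]]] Vx Vy.
  apply: rst_step; exists (u ++ u1), (v1 ++ t), l, r.
  by move: Vx Vy; rewrite -!catA => Vx Vy; split; rewrite -?catA ?endpt_cat.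
- exact: weq_refl.
- by apply/weq_sym/IH; rewrite (valid_weq_cat _ Wxy).
- by apply: weq_trans (IH1 Vx) (IH2 _); rewrite -(valid_weq_cat _ Wxy).
Qed.

Lemma weq_rel_at wD A u l r t : rel_at e wD (endpt A u) l r ->
  valid e wD A (u ++ l ++ t) -> weq e wD A (u ++ l ++ t) (u ++ r ++ t).
Proof.
move=> Hlr Vl; apply: rst_step; exists u, t, l, r; split=> //.
move: Vl; rewrite !valid_cat -(rel_at_endpt Hlr) (rel_at_valid Hlr).2.
by case/and3P=> -> _ ->.
Qed.

Lemma weq_catl wD A u v v' : weq e wD (endpt A u) v v' ->
  valid e wD A (u ++ v) -> weq e wD A (u ++ v) (u ++ v').
Proof. by move=> W; rewrite -[u ++ v]cats0 -[u ++ v']cats0 -!catA; apply: weq_congr. Qed.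

Lemma weq_catr wD A v v' t : weq e wD A v v' ->
  valid e wD A (v ++ t) -> weq e wD A (v ++ t) (v' ++ t).
Proof. exact: (@weq_congr wD A [::]). Qed.

Lemma valid_power wD A w k : valid e wD A w -> endpt A w = A ->
  valid e wD A (flatten (nseq k w)) /\ endpt A (flatten (nseq k w)) = A.
Proof.
move=> Vw Ew; elim: k => [|k [Vk Ek]] //=.
by rewrite valid_cat endpt_cat Ew Vw Vk.
Qed.

Lemma weq_power wD A w w' k : valid e wD A w -> endpt A w = A -> weq e wD A w w' ->
  weq e wD A (flatten (nseq k w)) (flatten (nseq k w')).
Proof.
move=> Vw Ew W; have [Vw' Ew'] := weq_valid_endpt W.
elim: k => [|k IH] /=; first exact: weq_refl.
have [Vk Ek] := valid_power k Vw Ew.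
apply: weq_trans (weq_catr W _) _; first by rewrite valid_cat Vw Ew.
apply: weq_catl; first by rewrite -Ew' Ew.
by rewrite valid_cat -Vw' Vw -Ew' Ew.
Qed.

Lemma rel_at_sq wD A g : gdef e wD A g -> rel_at e wD A [:: (g, false); (g, false)] [::].
Proof.
case: g => [i|] /= Hg; last by apply: R3; rewrite //= /ldef /= Hg.
by apply: R1; rewrite /= /ldef /= Hg is_source_sref is_sink_sref orbC Hg.
Qed.

Lemma rel_at_inv wD A g : gdef e wD A g -> rel_at e wD A [:: (g, false); (g, true)] [::].
Proof. by move=> Hg; apply: RinvR; rewrite /= /ldef /= gstepK Hg. Qed.

Lemma weq_inv_letter wD A u g t : valid e wD A (u ++ (g, true) :: t) ->
  weq e wD A (u ++ (g, true) :: t) (u ++ (g, false) :: t).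
Proof.
rewrite valid_cat /= /ldef /= gdef_gstep => /and3P[Vu Hg Vt].
have Vsq : valid e wD A (u ++ [:: (g, false); (g, false)] ++ (g, true) :: t).
  by rewrite valid_cat Vu /= /ldef /= gstepK !gdef_gstep Hg.
apply: weq_trans (weq_sym (weq_rel_at (rel_at_sq Hg) Vsq)) _.
have -> : u ++ [:: (g, false); (g, false)] ++ (g, true) :: t =
          (u ++ [:: (g, false)]) ++ [:: (g, false); (g, true)] ++ t by rewrite -catA.
have -> : u ++ (g, false) :: t = (u ++ [:: (g, false)]) ++ [::] ++ t by rewrite -catA.
apply: weq_rel_at; first by rewrite endpt_cat; apply: rel_at_inv; rewrite gdef_gstep.
by rewrite -catA.
Qed.

Definition forget_inv (l : letter V) : letter V := (l.1, false).

Lemma weq_forget_inv wD A w : valid e wD A w -> weq e wD A w (map forget_inv w).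
Proof.
elim: w A => [|[g b] w IH] A /=; first by move=> _; apply: weq_refl.
case/andP=> Hl Vw; have Ww := IH _ Vw.
apply: weq_trans (@weq_catl wD A [:: (g, b)] _ _ Ww _) _; first by rewrite /= Hl.
case: b Hl => Hl; last exact: weq_refl.
apply: (@weq_inv_letter wD A [::]).
by rewrite /= Hl -(weq_valid_endpt Ww).1.
Qed.

Lemma valid_R0_R A w : valid e false A w -> valid e true A w.
Proof.
elim: w A => [|[g b] w IH] A //= /andP[Hl /IH ->].
by rewrite andbT; case: b Hl; case: g.
Qed.

Lemma weq_R0_R A w w' : weq e false A w w' -> weq e true A w w'.
Proof.
elim=> [x y [u [v [l [r [-> -> Vx Vy Hlr]]]]]|x|x y _ IH|x y z _ IH1 _ IH2].
- apply: rst_step; exists u, v, l, r; split; rewrite ?valid_R0_R //.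
  by case: Hlr => *; [apply: RinvR|apply: RinvL|apply: R1|apply: R2|..];
    rewrite ?valid_R0_R.
- exact: weq_refl.
- exact: weq_sym.
- exact: weq_trans IH1 IH2.
Qed.

Definition sigw (s : seq V) : seq (letter V) := [seq (Sig i, false) | i <- s].

Lemma sigw_cat s1 s2 : sigw (s1 ++ s2) = sigw s1 ++ sigw s2.
Proof. exact: map_cat. Qed.

Lemma valid_sigw wD wD' A s : valid e wD A (sigw s) = valid e wD' A (sigw s).
Proof. by elim: s A => [|i s IH] A //=; rewrite IH. Qed.

Lemma weq_rotate wD A i s :
  valid e wD A (sigw (i :: s)) -> endpt A (sigw (i :: s)) = A ->
  weq e wD (sref i A) (sigw (s ++ [:: i])) [::] -> weq e wD A (sigw (i :: s)) [::].
Proof.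
move=> Vs Es W; have Hi : gdef e wD A (Sig i) by case/andP: Vs.
have Vii := (rel_at_valid (rel_at_sq Hi)).1.
have Vsii : valid e wD A (sigw (i :: s) ++ [:: (Sig i, false); (Sig i, false)] ++ [::]).
  by rewrite valid_cat Vs Es.
have Hsq : rel_at e wD (endpt A (sigw (i :: s))) [:: (Sig i, false); (Sig i, false)] [::].
  by rewrite Es; apply: rel_at_sq.
have := weq_rel_at Hsq Vsii; rewrite !cats0 => /weq_sym W1; apply: weq_trans W1 _.
have -> : sigw (i :: s) ++ [:: (Sig i, false); (Sig i, false)] =
          [:: (Sig i, false)] ++ sigw (s ++ [:: i]) ++ [:: (Sig i, false)].
  by rewrite sigw_cat -catA.
apply: weq_trans (weq_congr (u := [:: (Sig i, false)]) W _) _.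
  by move: Vsii; rewrite cats0 sigw_cat -!catA.
exact: (weq_rel_at (u := [::]) (t := [::]) (rel_at_sq Hi) Vii).
Qed.

Lemma weq_sigw_rev wD A s : valid e wD A (sigw s) ->
  [/\ valid e wD A (sigw (s ++ rev s)), endpt A (sigw (s ++ rev s)) = A &
      weq e wD A (sigw (s ++ rev s)) [::]].
Proof.
elim: s A => [|i s IH] A; first by split=> //; apply: weq_refl.
case/andP=> Hi /IH[Vs Es Ws].
have Vii := (rel_at_valid (rel_at_sq Hi)).1.
have -> : sigw ((i :: s) ++ rev (i :: s)) =
          [:: (Sig i, false)] ++ sigw (s ++ rev s) ++ [:: (Sig i, false)].
  by rewrite rev_cons -cats1 /= !sigw_cat catA.
have Vw : valid e wD A ([:: (Sig i, false)] ++ sigw (s ++ rev s) ++ [:: (Sig i, false)]).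
  by rewrite valid_cat /= Hi /= valid_cat Vs Es; case/andP: Vii.
split=> //; first by rewrite !endpt_cat /= Es srefK.
apply: weq_trans (weq_congr (u := [:: (Sig i, false)]) Ws Vw) _.
exact: (weq_rel_at (u := [::]) (t := [::]) (rel_at_sq Hi) Vii).
Qed.

End WordCalculus.

Section Heights.
Variables (V : finType) (e : rel V).
Hypotheses (e_sym : symmetric e) (e_irr : irreflexive e) (nbr : forall x, exists y, e x y).
Local Open Scope ring_scope.
Implicit Types (i j x y z : V) (s u v : seq V).

Definition height := {ffun V -> int}.
Implicit Types (h m : height).

Definition hsink h i := [forall y, e i y ==> (h i < h y)].
Definition hsource h i := [forall y, e i y ==> (h y < h i)].
Definition hextremal h i := hsink h i || hsource h i.
Definition graded h := forall x y, e x y -> (h x == h y + 1) || (h y == h x + 1).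

(* An isolated vertex is both a sink and a source and is treated as a sink, so
   the encoding only matches reflections when every vertex has a neighbour. *)
Definition hreflect h i : height :=
  [ffun x => if x == i then (if hsink h i then h x + 2 else h x - 2) else h x].

Fixpoint hvalid h s := if s is i :: s' then hextremal h i && hvalid (hreflect h i) s' else true.
Definition hfinal h s := foldl hreflect h s.

Definition orient h : {set V * V} := [set p | e p.1 p.2 && (h p.2 < h p.1)].

Lemma hsinkP h i y : hsink h i -> e i y -> h i < h y.
Proof. by move/forallP/(_ y)/implyP. Qed.

Lemma hsourceP h i y : hsource h i -> e i y -> h y < h i.
Proof. by move/forallP/(_ y)/implyP. Qed.

Lemma gradedP h x y : graded h -> e x y -> h x = h y + 1 \/ h y = h x + 1.
Proof. by move=> G /G /orP[/eqP|/eqP]; [left|right]. Qed.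

Lemma hextremal_nbr h i z : graded h -> hextremal h i -> e i z ->
  h z = h i + (if hsink h i then 1 else -1).
Proof.
move=> G X E; case S: (hsink h i); first by have := hsinkP S E; case: (gradedP G E) => ->; lia.
have R : hsource h i by move: X; rewrite /hextremal S.
by have := hsourceP R E; case: (gradedP G E) => ->; lia.
Qed.

Lemma is_source_orient h i : is_source e i (orient h) = hsource h i.
Proof. by apply/forallP/forallP=> H y; move: (H y); rewrite inE /=; case: (e i y). Qed.

Lemma is_sink_orient h i : is_sink e i (orient h) = hsink h i.
Proof.
by apply/forallP/forallP=> H y; move: (H y); rewrite inE /= [e y i]e_sym; case: (e i y).
Qed.

Lemma sref_orient h i : graded h -> hextremal h i -> sref i (orient h) = orient (hreflect h i).
Proof.
move=> G X; apply/setP=> [[x y]]; rewrite !inE /= !ffunE.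
case: (eqVneq x i) => [->|xi]; case: (eqVneq y i) => [->|yi] //=.
- by rewrite e_irr.
- rewrite e_sym; case E: (e i y) => //=; rewrite (hextremal_nbr G X E).
  by case: (hsink h i); lia.
- rewrite [e x i]e_sym; case E: (e i x) => //=; rewrite (hextremal_nbr G X E).
  by case: (hsink h i); lia.
Qed.

Lemma graded_hreflect h i : graded h -> hextremal h i -> graded (hreflect h i).
Proof.
move=> G X x y E; rewrite !ffunE.
case: (eqVneq x i) => [xi|xi]; case: (eqVneq y i) => [yi|yi] /=.
- by move: E; rewrite xi yi e_irr.
- rewrite xi in E *; rewrite (hextremal_nbr G X E); apply/orP.
  by case: (hsink h i); lia.
- rewrite yi e_sym in E *; rewrite (hextremal_nbr G X E); apply/orP.
  by case: (hsink h i); lia.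
- exact: G.
Qed.

Definition hneg h : height := [ffun x => - h x].

Lemma graded_hneg h : graded h -> graded (hneg h).
Proof. by move=> G x y E; rewrite !ffunE; case: (gradedP G E) => ->; apply/orP; lia. Qed.

Lemma orient_hneg h : orient (hneg h) = opp (orient h).
Proof.
apply/setP=> [[x y]]; rewrite !inE /= !ffunE e_sym ltrN2.
by case: (e y x).
Qed.

Lemma hvalid_cat h u v : hvalid h (u ++ v) = hvalid h u && hvalid (hfinal h u) v.
Proof. by elim: u h => //= i u IH h; rewrite IH andbA. Qed.

Lemma hfinal_cat h u v : hfinal h (u ++ v) = hfinal (hfinal h u) v.
Proof. exact: foldl_cat. Qed.

Lemma graded_hfinal h s : graded h -> hvalid h s -> graded (hfinal h s).
Proof.
by elim: s h => [|i s IH] h //= G /andP[X Vs]; apply: IH (graded_hreflect G X) Vs.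
Qed.

Lemma valid_orient wD h s : graded h -> valid e wD (orient h) (sigw s) = hvalid h s.
Proof.
elim: s h => [|i s IH] h G //=.
rewrite /ldef /= is_source_orient is_sink_orient orbC -/(hextremal h i).
by case X: (hextremal h i) => //=; rewrite sref_orient // IH //; apply: graded_hreflect.
Qed.

Lemma endpt_orient h s : graded h -> hvalid h s ->
  endpt (orient h) (sigw s) = orient (hfinal h s).
Proof.
elim: s h => [|i s IH] h G //= /andP[X Vs].
by rewrite sref_orient // IH //; apply: graded_hreflect.
Qed.

Definition hge m h := [forall x, m x <= h x].
Definition potential m h : nat := \sum_x absz (h x - m x).

(* The termination measure of peak reduction: the potentials, above the floor
   [m], of the intermediate heights of a word. *)
Fixpoint above m h s := hge m h && (if s is i :: s' then above m (hreflect h i) s' else true).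
Fixpoint weight m h s : nat :=
  if s is i :: s' then (potential m h + weight m (hreflect h i) s')%N else 0%N.
Fixpoint rising h s := if s is i :: s' then hsink h i && rising (hreflect h i) s' else true.
Fixpoint falling h s := if s is i :: s' then ~~ hsink h i && falling (hreflect h i) s' else true.

Lemma hgeP m h x : hge m h -> m x <= h x.
Proof. by move/forallP. Qed.

Lemma above_hge m h s : above m h s -> hge m h.
Proof. by case: s => [|i s] /andP[]. Qed.

Lemma above_cat m h u v : above m h (u ++ v) = above m h u && above m (hfinal h u) v.
Proof.
elim: u h => [|i u IH] h /=; last by rewrite IH andbA.
by rewrite andbT; apply/idP/andP=> [Av|[]//]; split=> //; apply: above_hge Av.
Qed.

Lemma weight_cat m h u v : weight m h (u ++ v) = (weight m h u + weight m (hfinal h u) v)%N.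
Proof. by elim: u h => //= i u IH h; rewrite IH addnA. Qed.

Lemma rising_cat h u v : rising h (u ++ v) = rising h u && rising (hfinal h u) v.
Proof. by elim: u h => //= i u IH h; rewrite IH andbA. Qed.

Lemma rising_le h s x : rising h s -> h x <= hfinal h s x.
Proof.
elim: s h => [|i s IH] h //= /andP[S R]; apply: le_trans (IH _ R).
by rewrite ffunE S; case: (x == i); lia.
Qed.

Lemma falling_ge h s x : falling h s -> hfinal h s x <= h x.
Proof.
elim: s h => [|i s IH] h //= /andP[S R]; apply: le_trans (IH _ R) _.
by rewrite ffunE (negbTE S); case: (x == i); lia.
Qed.

Lemma hsink_hreflect h i j : j != i -> ~~ e j i -> hsink (hreflect h i) j = hsink h j.
Proof.
move=> ji nji; apply: eq_forallb => y; rewrite !ffunE (negbTE ji).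
by case: (eqVneq y i) => [->|//]; rewrite (negbTE nji).
Qed.

Lemma hsource_hreflect h i j : j != i -> ~~ e j i -> hsource (hreflect h i) j = hsource h j.
Proof.
move=> ji nji; apply: eq_forallb => y; rewrite !ffunE (negbTE ji).
by case: (eqVneq y i) => [->|//]; rewrite (negbTE nji).
Qed.

Lemma potential_lt m h1 h2 x0 : hge m h1 -> (forall x, h1 x <= h2 x) -> h1 x0 < h2 x0 ->
  (potential m h1 < potential m h2)%N.
Proof.
move=> G1 L1 L0; rewrite /potential (bigD1 x0) //= [X in (_ < X)%N](bigD1 x0) //=.
have := hgeP x0 G1; have := L1 x0.
have : (\sum_(x | x != x0) absz (h1 x - m x) <= \sum_(x | x != x0) absz (h2 x - m x))%N.
  by apply: leq_sum => x _; have := hgeP x G1; have := L1 x; lia.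
lia.
Qed.

Lemma hreflect_sinkK h i : hsink h i -> ~~ hsink (hreflect h i) i -> hreflect (hreflect h i) i = h.
Proof.
move=> S1 S2; apply/ffunP=> x; rewrite !ffunE (negbTE S2) S1.
by case: (eqVneq x i) => [->|] //=; lia.
Qed.

Lemma peak_commute h i j : graded h -> i != j -> hsink h i ->
  hextremal (hreflect h i) j -> ~~ hsink (hreflect h i) j ->
  [/\ ~~ e i j, hsource h j, ~~ hsink h j, hsink (hreflect h j) i &
      hreflect (hreflect h i) j = hreflect (hreflect h j) i].
Proof.
move=> G ij Si Xj NSj; have ji : j != i by rewrite eq_sym.
have Rj : hsource (hreflect h i) j by move: Xj; rewrite /hextremal (negbTE NSj).
have nij : ~~ e i j.
  apply/negP=> Eij; have := hsinkP Si Eij; rewrite e_sym in Eij.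
  have := hsourceP Rj Eij; rewrite !ffunE eqxx (negbTE ji) Si.
  by case: (gradedP G Eij) => ->; lia.
have nji : ~~ e j i by rewrite e_sym.
have NSj0 : ~~ hsink h j by rewrite -(hsink_hreflect _ ji nji).
have Si1 : hsink (hreflect h j) i by rewrite hsink_hreflect // eq_sym.
split=> //; first by rewrite -(hsource_hreflect _ ji nji).
apply/ffunP=> x; rewrite !ffunE (negbTE NSj) Si Si1 (negbTE NSj0).
by case: (x == j); case: (x == i); rewrite /= ?addrK ?subrK.
Qed.

Lemma hreflect_swap_le h i j : hsink h i -> ~~ hsink h j -> i != j ->
  (forall x, hreflect h j x <= hreflect h i x) /\ hreflect h j i < hreflect h i i.
Proof.
move=> Si NSj ij; split; last by rewrite !ffunE eqxx (negbTE ij) Si /=; lia.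
by move=> x; rewrite !ffunE Si (negbTE NSj); case: (x == j); case: (x == i) => /=; lia.
Qed.

Definition lighter m h s' s :=
  (size s' < size s)%N || (size s' == size s) && (weight m h s' < weight m h s)%N.

Definition reduces m h s s' :=
  [/\ hvalid h s', hfinal h s' = hfinal h s, above m h s',
      weq e false (orient h) (sigw s) (sigw s') & lighter m h s' s].

Lemma peak_cancel m h u i v : graded h ->
  hvalid h (u ++ [:: i, i & v]) -> above m h (u ++ [:: i, i & v]) ->
  hsink (hfinal h u) i -> ~~ hsink (hreflect (hfinal h u) i) i ->
  reduces m h (u ++ [:: i, i & v]) (u ++ v).
Proof.
move=> G Vs As Si NSi; move: (Vs) (As); rewrite hvalid_cat above_cat.
case/andP=> Vu /= /and3P[_ _ Vv] /andP[Au /= /and3P[_ _ Av]].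
have E := hreflect_sinkK Si NSi.
have Vw : valid e false (orient h) (sigw u ++ sigw [:: i, i & v]).
  by rewrite -sigw_cat valid_orient.
split.
- by rewrite hvalid_cat Vu -E.
- by rewrite !hfinal_cat /= E.
- by rewrite above_cat Au -E Av.
- rewrite !sigw_cat -[sigw [:: i, i & v]]/([:: (Sig i, false); (Sig i, false)] ++ sigw v).
  apply: (weq_rel_at (r := [::])); last exact: Vw.
  by rewrite endpt_orient //; apply: rel_at_sq; rewrite /= is_source_orient is_sink_orient Si orbT.
- by rewrite /lighter !size_cat /= ltn_add2l ltnS leqnSn.
Qed.

Lemma peak_swap m h u i j v : graded h -> i != j ->
  hvalid h (u ++ [:: i, j & v]) -> above m h (u ++ [:: i, j & v]) ->
  hsink (hfinal h u) i -> ~~ hsink (hreflect (hfinal h u) i) j ->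
  reduces m h (u ++ [:: i, j & v]) (u ++ [:: j, i & v]).
Proof.
move=> G ij Vs As Si NSj; move: (Vs) (As); rewrite hvalid_cat above_cat.
case/andP=> Vu /= /and3P[Xi Xj Vv] /andP[Au /= /and3P[Gu _ Av]].
set hu := hfinal h u in Xi Xj Vv Gu Av Si NSj *.
have Ghu : graded hu by apply: graded_hfinal.
have ji : j != i by rewrite eq_sym.
have [nij Rj0 NSj0 Si1 Ecom] := peak_commute Ghu ij Si Xj NSj.
have Xj0 : hextremal hu j by rewrite /hextremal Rj0 orbT.
have Gj : hge m (hreflect hu j).
  apply/forallP=> x; have := hgeP x (above_hge Av); have := hgeP x Gu.
  rewrite !ffunE Si (negbTE NSj) (negbTE NSj0).
  by case: (eqVneq x j) => [->|_ _ //]; rewrite (negbTE ji) => _ ->.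
have Vji : hvalid h (u ++ [:: j, i & v]).
  by rewrite hvalid_cat Vu -/hu /= Xj0 /hextremal Si1 -Ecom Vv.
split=> //.
- by rewrite !hfinal_cat /= -/hu Ecom.
- by rewrite above_cat Au -/hu /= Gu Gj -Ecom Av.
- rewrite !sigw_cat -[sigw [:: i, j & v]]/([:: (Sig i, false); (Sig j, false)] ++ sigw v).
  rewrite -[sigw [:: j, i & v]]/([:: (Sig j, false); (Sig i, false)] ++ sigw v).
  apply: weq_sym; apply: weq_rel_at; last first.
    by rewrite -[_ ++ sigw v]/(sigw [:: j, i & v]) -sigw_cat valid_orient.
  rewrite endpt_orient //; apply: R2; first exact: nij.
    by rewrite -[[:: _; _]]/(sigw [:: j; i]) valid_orient //= Xj0 /hextremal Si1.
  by rewrite -[[:: _; _]]/(sigw [:: i; j]) valid_orient //= Xi Xj.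
- rewrite /lighter !size_cat eqxx ltnn /= !weight_cat /= -/hu ltn_add2l ltn_add2l -Ecom.
  have [Lji Lt] := hreflect_swap_le Si NSj0 ij.
  by rewrite ltn_add2r; apply: (potential_lt (x0 := i)).
Qed.

Lemma peak_reduction m h u i j v : graded h ->
  hvalid h (u ++ [:: i, j & v]) -> above m h (u ++ [:: i, j & v]) ->
  hsink (hfinal h u) i -> ~~ hsink (hreflect (hfinal h u) i) j ->
  exists s', reduces m h (u ++ [:: i, j & v]) s'.
Proof.
move=> G Vs As Si NSj; case: (eqVneq i j) => [<-|ij] in Vs As NSj *.
  by exists (u ++ v); apply: peak_cancel.
by exists (u ++ [:: j, i & v]); apply: peak_swap.
Qed.

Definition peaked h s := exists u i j v,
  [/\ s = u ++ [:: i, j & v], hsink (hfinal h u) i & ~~ hsink (hreflect (hfinal h u) i) j].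

Lemma peakedVrising h s : peaked h s \/
  forall u i v, s = u ++ i :: v -> hsink (hfinal h u) i -> rising (hreflect (hfinal h u) i) v.
Proof.
elim: s h => [|i s IH] h; first by right=> [[|? ?]].
case: (IH (hreflect h i)) => [[u [a [b [v [-> S1 S2]]]]]|NP].
  by left; exists (i :: u), a, b, v.
case Si: (hsink h i); last by right=> [[|b u] a v [<- E]] //=; [rewrite Si|apply: NP].
case: s IH NP => [|j s] _ NP; first by right=> [[|b [|? ?]] a v] //= [<- <-].
case Sj: (hsink (hreflect h i) j); last by left; exists [::], i, j, s; rewrite /= Si Sj.
right=> [[|b u] a v [<- E]]; last exact: NP.
by move=> _; rewrite -E /= Sj (NP [::] j s).
Qed.

Lemma fallingVsink h s : falling h s \/ exists u j v, s = u ++ j :: v /\ hsink (hfinal h u) j.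
Proof.
elim: s h => [|i s IH] h /=; first by left.
case Si: (hsink h i); first by right; exists [::], i, s.
case: (IH (hreflect h i)) => [->|[u [j [v [-> Sj]]]]]; first by left.
by right; exists (i :: u), j, v.
Qed.

(* Such a loop first descends at i and rises later, so moving i to the end
   creates a peak. *)
Lemma peakless_loop_rotate h i s : hfinal h (i :: s) = h ->
  (forall u j v, i :: s = u ++ j :: v -> hsink (hfinal h u) j ->
     rising (hreflect (hfinal h u) j) v) ->
  peaked (hreflect h i) (s ++ [:: i]).
Proof.
move=> Es NP; have Es' : hfinal (hreflect h i) s = h := Es.
case Si: (hsink h i).
  have := rising_le i (NP [::] i s erefl Si); rewrite /= Es' ffunE eqxx Si.
  by rewrite gerDl.
set h1 := hreflect h i.
have [Fs|[u [j [v [Es1 Sj]]]]] := fallingVsink h1 s.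
  have := falling_ge i Fs; rewrite Es' ffunE eqxx Si.
  by rewrite lerBrDr gerDl.
case: (peakedVrising h1 (s ++ [:: i])) => // NP'.
have := NP' u j (v ++ [:: i]); rewrite Es1 -catA => /(_ erefl Sj).
rewrite rising_cat /= => /and3P[_ Si' _]; move: Si'.
suff -> : hfinal (hreflect (hfinal h1 u) j) v = h by rewrite Si.
by rewrite -Es' Es1 hfinal_cat.
Qed.

Lemma closed_weq_nil m h s : graded h -> hvalid h s -> hfinal h s = h -> above m h s ->
  weq e false (orient h) (sigw s) [::].
Proof.
move Hn: (size s) => n; move Hw: (weight m h s) => N.
elim/ltn_ind: n N h s Hn Hw => n IHn; elim/ltn_ind=> N IHN h s Hn Hw.
have IH h' s' : graded h' -> hvalid h' s' -> hfinal h' s' = h' -> above m h' s' ->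
    (size s' < n)%N || (size s' == n) && (weight m h' s' < N)%N ->
    weq e false (orient h') (sigw s') [::].
  move=> G' V' E' A' /orP[lt|/andP[/eqP eq lt]]; first exact: IHn lt _ _ _ erefl erefl G' V' E' A'.
  exact: IHN lt _ _ eq erefl G' V' E' A'.
have peak_weq h' s' : graded h' -> hvalid h' s' -> hfinal h' s' = h' -> above m h' s' ->
    size s' = n -> weight m h' s' = N -> peaked h' s' -> weq e false (orient h') (sigw s') [::].
  move=> G' V' E' A' Sz Wt [u [i [j [v [Es' Si NSj]]]]]; subst s'.
  have [s'' [V'' E'' A'' W'' L'']] := peak_reduction G' V' A' Si NSj.
  apply: weq_trans W'' (IH _ _ G' V'' _ A'' _); first by rewrite E'' E'.
  by rewrite -Sz -Wt.
move=> G Vs Es As; case: s Hn Hw Vs Es As => [|i s] Hn Hw Vs Es As; first exact: weq_refl.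
case: (peakedVrising h (i :: s)) => [|NP]; first exact: peak_weq.
have /= /andP[Xi Vs1] := Vs; have Es' : hfinal (hreflect h i) s = h := Es.
apply: weq_rotate; [by rewrite valid_orient|by rewrite endpt_orient // Es|].
rewrite sref_orient //; apply: peak_weq; last exact: peakless_loop_rotate Es NP.
- exact: graded_hreflect.
- by rewrite hvalid_cat Vs1 Es' /= Xi.
- by rewrite hfinal_cat Es'.
- by move: As => /= /andP[Ah As1]; rewrite above_cat As1 Es' /= Ah (above_hge As1).
- by rewrite size_cat addn1.
- by rewrite weight_cat Es' /= -Hw /= addn0 addnC.
Qed.

Lemma hreflectK h i y : graded h -> hextremal h i -> e i y ->
  hextremal (hreflect h i) i /\ hreflect (hreflect h i) i = h.
Proof.
move=> G X Ey.
have Nz z : e i z -> hreflect h i z = h i + (if hsink h i then 1 else -1).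
  move=> Ez; rewrite ffunE ifN ?(hextremal_nbr G X Ez) //.
  by apply: contraTneq Ez => ->; rewrite e_irr.
have Ri : hreflect h i i = if hsink h i then h i + 2 else h i - 2 by rewrite ffunE eqxx.
case S: (hsink h i) in Nz Ri.
  have S' : hsink (hreflect h i) i = false.
    by apply/negbTE/negP=> /hsinkP/(_ Ey); rewrite Ri Nz //; lia.
  split; last by apply/ffunP=> x; rewrite !ffunE S' S; case: (x == i) => //; lia.
  rewrite /hextremal S'; apply/forallP=> z; apply/implyP=> Ez.
  by rewrite Ri Nz //; lia.
have S' : hsink (hreflect h i) i.
  by apply/forallP=> z; apply/implyP=> Ez; rewrite Ri Nz //; lia.
split; first by rewrite /hextremal S'.
by apply/ffunP=> x; rewrite !ffunE S' S; case: (x == i) => //; lia.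
Qed.

Lemma hvalid_rev h s : graded h -> hvalid h s ->
  hvalid (hfinal h s) (rev s) /\ hfinal (hfinal h s) (rev s) = h.
Proof.
elim: s h => [|i s IH] h G //= /andP[X Vs].
have [y Ey] := nbr i; have [X' E'] := hreflectK G X Ey.
have [V1 H1] := IH _ (graded_hreflect G X) Vs.
by rewrite rev_cons -cats1 hvalid_cat hfinal_cat V1 H1 /= X' E'.
Qed.

Lemma above_bound m h s : (forall x, m x + 2 * (size s)%:Z <= h x) -> above m h s.
Proof.
elim: s h => [|i s IH] h H /=.
  by rewrite andbT; apply/forallP=> x; have := H x; lia.
apply/andP; split; first by apply/forallP=> x; have := H x; lia.
apply: IH => x; have := H x; rewrite ffunE.
by case: (x == i); [case: (hsink h i)|] => /=; lia.
Qed.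

Theorem weq_hfinal h s s' : graded h -> hvalid h s -> hvalid h s' ->
  hfinal h s = hfinal h s' -> weq e false (orient h) (sigw s) (sigw s').
Proof.
(* s = s (rev s' ++ s') = (s ++ rev s') s', and s ++ rev s' is a loop. *)
move=> G Vs Vs' Es.
have [Vr Er] := hvalid_rev G Vs'.
have Vw : hvalid h (s ++ rev s') by rewrite hvalid_cat Vs Es Vr.
have Ew : hfinal h (s ++ rev s') = h by rewrite hfinal_cat Es Er.
pose m : height := [ffun x => h x - 2 * (size (s ++ rev s'))%:Z].
have Aw : above m h (s ++ rev s') by apply: above_bound => x; rewrite ffunE; lia.
have Wnil := closed_weq_nil G Vw Ew Aw.
have Gs : graded (hfinal h s) by apply: graded_hfinal.
have Vr' : valid e false (orient (hfinal h s)) (sigw (rev s')) by rewrite valid_orient // Es.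
have [_ _ Wc] := weq_sigw_rev Vr'; rewrite revK in Wc.
apply: weq_trans (_ : weq _ _ _ (sigw s ++ sigw (rev s' ++ s')) _).
  rewrite -{1}[sigw s]cats0; apply: weq_catl; last by rewrite cats0 valid_orient.
  by apply: weq_sym; rewrite endpt_orient.
rewrite sigw_cat catA -sigw_cat; apply: weq_catr Wnil _.
by rewrite -sigw_cat valid_orient // hvalid_cat Vw Ew.
Qed.

Lemma hvalid_sinks h t : uniq t -> {in t &, forall a b, ~~ e a b} ->
  {in t, forall a, hsink h a} ->
  hvalid h t /\ hfinal h t = [ffun x => if x \in t then h x + 2 else h x].
Proof.
elim: t h => [|a t IH] h /= U N S; first by split=> //; apply/ffunP=> x; rewrite ffunE.
case/andP: U => at_ U; have Sa := S a (mem_head a t).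
have N' : {in t &, forall a b, ~~ e a b} by move=> b c Bt Ct; apply: N; rewrite inE ?Bt ?Ct orbT.
have S' : {in t, forall b, hsink (hreflect h a) b}.
  move=> b Bt; rewrite hsink_hreflect; first by apply: S; rewrite inE Bt orbT.
    by apply: contraNneq at_ => <-.
  by apply: N; rewrite inE ?eqxx ?Bt ?orbT.
have [V1 ->] := IH _ U N' S'; split; first by rewrite /hextremal Sa.
apply/ffunP=> x; rewrite !ffunE inE Sa.
by case: (eqVneq x a) => [->|_] /=; [rewrite (negbTE at_)|case: (x \in t)].
Qed.

Lemma hvalid_sources h t : uniq t -> {in t &, forall a b, ~~ e a b} ->
  {in t, forall a, hsource h a && ~~ hsink h a} ->
  hvalid h t /\ hfinal h t = [ffun x => if x \in t then h x - 2 else h x].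
Proof.
elim: t h => [|a t IH] h /= U N S; first by split=> //; apply/ffunP=> x; rewrite ffunE.
case/andP: U => at_ U; have /andP[Ra Sa] := S a (mem_head a t).
have N' : {in t &, forall a b, ~~ e a b} by move=> b c Bt Ct; apply: N; rewrite inE ?Bt ?Ct orbT.
have S' : {in t, forall b, hsource (hreflect h a) b && ~~ hsink (hreflect h a) b}.
  move=> b Bt; have ba : b != a by apply: contraNneq at_ => <-.
  have nba : ~~ e b a by apply: N; rewrite inE ?eqxx ?Bt ?orbT.
  by rewrite hsink_hreflect // hsource_hreflect //; apply: S; rewrite inE Bt orbT.
have [V1 ->] := IH _ U N' S'; split; first by rewrite /hextremal Ra orbT.
apply/ffunP=> x; rewrite !ffunE inE (negbTE Sa).
by case: (eqVneq x a) => [->|_] /=; [rewrite (negbTE at_)|case: (x \in t)].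
Qed.

Lemma hvalid_iter (H : int -> height) (b : seq V) (d : int) :
  (forall c, hvalid (H c) b /\ hfinal (H c) b = H (c + d)) ->
  forall n c, hvalid (H c) (flatten (nseq n b)) /\
              hfinal (H c) (flatten (nseq n b)) = H (c + d * n%:Z).
Proof.
move=> Hb; elim=> [|n IH] c /=; first by rewrite mulr0 addr0.
have [V1 E1] := Hb c; have [V2 E2] := IH (c + d).
by rewrite hvalid_cat hfinal_cat V1 E1 V2 E2 intS mulrDr mulr1 addrA.
Qed.

Lemma hfinal_parity h s x : exists k : int, hfinal h s x = h x + 2 * k.
Proof.
elim: s h => [|i s IH] h /=; first by exists 0; rewrite mulr0 addr0.
have [k ->] := IH (hreflect h i); rewrite ffunE.
case: (x == i); last by exists k.
by case: (hsink h i); [exists (k + 1)|exists (k - 1)]; lia.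
Qed.

Section Alternating.
Variable Ip : {set V}.
Hypothesis e_conn : forall x y, connect e x y.
Hypothesis bip : is_bipartition e Ip.

Lemma orient_eq_shift h h' x y : graded h -> graded h' -> orient h = orient h' ->
  h' x - h x = h' y - h y.
Proof.
move=> G G' E; have /connectP[p P ->] := e_conn x y.
elim: p x P => [|z p IH] x //= /andP[Exz P]; rewrite -IH //.
have : ((x, z) \in orient h) = ((x, z) \in orient h') by rewrite E.
rewrite !inE /= Exz /=.
by case: (gradedP G Exz) => ->; case: (gradedP G' Exz) => ->; lia.
Qed.

Lemma bip_nbr x y : e x y -> (y \in Ip) = ~~ (x \in Ip).
Proof. by move/bip; case: (x \in Ip); case: (y \in Ip). Qed.

Lemma bip_indep (S : {set V}) : S \subset Ip \/ S \subset ~: Ip ->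
  {in enum S &, forall a b, ~~ e a b}.
Proof.
move=> sub a b; rewrite !mem_enum => Sa Sb; apply/negP=> /bip_nbr.
case: sub => /subsetP sub; move: (sub a Sa) (sub b Sb); rewrite ?inE.
  by move=> -> ->.
by move=> /negbTE-> /negbTE->.
Qed.

Definition hbip (c : int) : height := [ffun x => if x \in Ip then c + 1 else c].

Lemma graded_hbip c : graded (hbip c).
Proof. by move=> x y E; rewrite !ffunE (bip_nbr E); case: (x \in Ip) => /=; lia. Qed.

Lemma orient_hbip c : orient (hbip c) = Gamma0 e Ip.
Proof.
apply/setP=> [[x y]]; rewrite !inE /= !ffunE.
by case E: (e x y) => //=; rewrite (bip_nbr E); case: (x \in Ip) => /=; lia.
Qed.

Definition up_block := enum (~: Ip) ++ enum Ip.
Definition down_block := enum Ip ++ enum (~: Ip).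

Lemma hvalid_up_block c : hvalid (hbip c) up_block /\ hfinal (hbip c) up_block = hbip (c + 2).
Proof.
have S1 : {in enum (~: Ip), forall a, hsink (hbip c) a}.
  move=> a; rewrite mem_enum inE => Aa; apply/forallP=> y; apply/implyP=> E.
  by rewrite !ffunE (bip_nbr E) (negbTE Aa) /=; lia.
have [V1 E1] := hvalid_sinks (enum_uniq _) (bip_indep (or_intror (subxx _))) S1.
have S2 : {in enum Ip, forall a, hsink (hfinal (hbip c) (enum (~: Ip))) a}.
  move=> a; rewrite mem_enum => Aa; apply/forallP=> y; apply/implyP=> E.
  by rewrite E1 !ffunE !mem_enum !inE Aa (bip_nbr E) Aa /=; lia.
have [V2 E2] := hvalid_sinks (enum_uniq _) (bip_indep (or_introl (subxx _))) S2.
rewrite /up_block hvalid_cat hfinal_cat V1 V2 E2 E1; split=> //.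
by apply/ffunP=> x; rewrite !ffunE !mem_enum !inE; case: (x \in Ip) => /=; lia.
Qed.

Lemma hvalid_rev_Ip : hvalid (hneg (hbip 0)) (rev (enum Ip)) /\
                      hfinal (hneg (hbip 0)) (rev (enum Ip)) = hbip 0.
Proof.
have S : {in rev (enum Ip), forall a, hsink (hneg (hbip 0)) a}.
  move=> a; rewrite mem_rev mem_enum => Aa; apply/forallP=> y; apply/implyP=> E.
  by rewrite !ffunE (bip_nbr E) Aa /=; lia.
have N : {in rev (enum Ip) &, forall a b, ~~ e a b}.
  by move=> a b; rewrite !mem_rev; apply: bip_indep; left.
have U : uniq (rev (enum Ip)) by rewrite rev_uniq enum_uniq.
have [-> ->] := hvalid_sinks U N S; split=> //.
by apply/ffunP=> x; rewrite !ffunE mem_rev mem_enum; case: (x \in Ip) => /=; lia.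
Qed.

Lemma hvalid_down_block c :
  hvalid (hbip c) down_block /\ hfinal (hbip c) down_block = hbip (c - 2).
Proof.
have NS h a y : e a y -> h y <= h a -> ~~ hsink h a.
  by move=> E L; apply/negP=> /hsinkP/(_ E); lia.
have S1 : {in enum Ip, forall a, hsource (hbip c) a && ~~ hsink (hbip c) a}.
  move=> a; rewrite mem_enum => Aa; have [y Ey] := nbr a; apply/andP; split.
    by apply/forallP=> z; apply/implyP=> E; rewrite !ffunE (bip_nbr E) Aa /=; lia.
  by apply: (NS _ _ _ Ey); rewrite !ffunE (bip_nbr Ey) Aa /=; lia.
have [V1 E1] := hvalid_sources (enum_uniq _) (bip_indep (or_introl (subxx _))) S1.
set h1 := hfinal (hbip c) (enum Ip) in V1 E1.
have S2 : {in enum (~: Ip), forall a, hsource h1 a && ~~ hsink h1 a}.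
  move=> a; rewrite mem_enum inE => Aa; have [y Ey] := nbr a; apply/andP; split.
    apply/forallP=> z; apply/implyP=> E.
    by rewrite E1 !ffunE !mem_enum (bip_nbr E) (negbTE Aa) /=; lia.
  by apply: (NS _ _ _ Ey); rewrite E1 !ffunE !mem_enum (bip_nbr Ey) (negbTE Aa) /=; lia.
have [V2 E2] := hvalid_sources (enum_uniq _) (bip_indep (or_intror (subxx _))) S2.
rewrite /down_block hvalid_cat hfinal_cat V1 -/h1 V2 E2 E1; split=> //.
by apply/ffunP=> x; rewrite !ffunE !mem_enum !inE; case: (x \in Ip) => /=; lia.
Qed.

Lemma weq_alternating_power s : hvalid (hbip 0) s -> orient (hfinal (hbip 0) s) = Gamma0 e Ip ->
  exists k b, weq e false (Gamma0 e Ip) (sigw s)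
                (sigw (flatten (nseq k (if b then up_block else down_block)))).
Proof.
move=> Vs Es; rewrite -(orient_hbip 0).
case: s Vs Es => [|x0 s1] Vs Es; first by exists 0%N, true; apply: weq_refl.
set s := x0 :: s1 in Vs Es *.
have G0 := graded_hbip 0; have GE : graded (hfinal (hbip 0) s) by apply: graded_hfinal.
have Sh := orient_eq_shift x0 _ G0 GE; rewrite Es -(orient_hbip 0) in Sh.
have [k Hk] := hfinal_parity (hbip 0) s x0.
have Hall y : hfinal (hbip 0) s y = hbip 0 y + 2 * k by have := Sh y erefl; rewrite Hk; lia.
case: k Hall {Hk} => n Hall.
  have [V' E'] := hvalid_iter hvalid_up_block n 0.
  exists n, true; apply: weq_hfinal => //; rewrite E'.
  by apply/ffunP=> y; rewrite Hall !ffunE; case: (y \in Ip); lia.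
have [V' E'] := hvalid_iter hvalid_down_block n.+1 0.
exists n.+1, false; apply: weq_hfinal => //; rewrite E'.
by apply/ffunP=> y; rewrite Hall !ffunE; case: (y \in Ip); lia.
Qed.

End Alternating.
End Heights.

Section Generators.
Variables (V : finType) (e : rel V) (Ip : {set V}).
Hypotheses (e_sym : symmetric e) (e_irr : irreflexive e) (e_conn : forall x y, connect e x y).
Hypothesis bip : is_bipartition e Ip.
Implicit Types (x y : V) (s : seq V) (A : {set V * V}) (w : seq (letter V)).

Local Notation G0 := (Gamma0 e Ip).

Definition sigma_loop (b : bool) : seq (letter V) :=
  if b then SigmaW (~: Ip) ++ SigmaW Ip else SigmaW Ip ++ SigmaW (~: Ip).

Lemma sigma_loopE b : sigma_loop b = sigw (if b then up_block Ip else down_block Ip).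
Proof. by case: b; rewrite sigw_cat. Qed.

Definition sigs w : seq V := pmap (fun l : letter V => if l.1 is Sig i then Some i else None) w.

Lemma map_forget_inv_R0 A w : valid e false A w -> map (@forget_inv V) w = sigw (sigs w).
Proof.
elim: w A => [|[[i|] b] w IH] A //=; last by rewrite /ldef; case: b.
by case/andP=> _ /IH ->.
Qed.

Lemma sigw_flatten k s : sigw (flatten (nseq k s)) = flatten (nseq k (sigw s)).
Proof. by elim: k => //= k IH; rewrite sigw_cat IH. Qed.

Section IsolatedVertex.
Variable x : V.
Hypothesis x_isolated : forall y, ~~ e x y.

Lemma gdef_isolated wD A : gdef e wD A (Sig x).
Proof. by apply/orP; left; apply/forallP=> y; rewrite (negbTE (x_isolated y)). Qed.

Lemma valid_isolated wD A n : valid e wD A (sigw (nseq n x)).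
Proof. by elim: n A => [|n IH] A //=; rewrite IH andbT; apply: gdef_isolated. Qed.

Lemma weq_isolated A n : weq e false A (sigw (nseq n x)) (sigw (nseq (odd n) x)).
Proof.
elim/ltn_ind: n => -[|[|m]] IH; try exact: weq_refl.
rewrite [odd _]/= negbK; apply: weq_trans (IH m (leqW (ltnSn m))).
rewrite -[sigw _]/([:: (Sig x, false); (Sig x, false)] ++ sigw (nseq m x)).
exact: (weq_rel_at (u := [::]) (rel_at_sq (gdef_isolated _ _)) (valid_isolated _ _ m.+2)).
Qed.

End IsolatedVertex.

Definition sigma_power w := exists k b,
  [/\ weq e false G0 w (flatten (nseq k (sigma_loop b))),
      valid e false G0 (sigma_loop b) & endpt G0 (sigma_loop b) = G0].

Lemma sigma_power_singleton x s : (forall y, ~~ e x y) -> sigma_power (sigw s).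
Proof.
move=> iso; have allx y : y = x.
  have /connectP[[|z p] /= P ->] := e_conn x y => //.
  by case/andP: P => E _; move: (iso z); rewrite E.
have Es : s = nseq (size s) x by apply/all_pred1P/allP=> y _; rewrite [y]allx /=.
have Eb : up_block Ip = [:: x].
  have : size (up_block Ip) = 1%N.
    rewrite size_cat -!cardE addnC cardsC.
    by apply: (@eq_card1 _ x) => y; rewrite [y]allx !inE eqxx.
  by case: (up_block Ip) => [|a [|? ?]] //= _; rewrite [a]allx.
exists (odd (size s)), true; rewrite sigma_loopE Eb; split.
- rewrite {1}Es; apply: weq_trans (weq_isolated iso _ _) _.
  by case: (odd _) => /=; rewrite ?cats0; apply: weq_refl.
- exact: (valid_isolated iso _ _ 1).
- apply/setP=> [[a b]]; rewrite !inE [a]allx [b]allx eqxx /=.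
  by rewrite (negbTE (iso x)).
Qed.

Lemma sigma_power_nbr s : (forall x, exists y, e x y) ->
  valid e false G0 (sigw s) -> endpt G0 (sigw s) = G0 -> sigma_power (sigw s).
Proof.
move=> nbr Vs Es; have G := graded_hbip bip 0.
rewrite -(orient_hbip bip 0) valid_orient // in Vs.
rewrite -(orient_hbip bip 0) endpt_orient // (orient_hbip bip 0) in Es.
have [k [b Wk]] := weq_alternating_power e_sym e_irr nbr e_conn bip Vs Es.
have [Vb Eb] : hvalid e (hbip Ip 0) (if b then up_block Ip else down_block Ip) /\
               orient e (hfinal e (hbip Ip 0) (if b then up_block Ip else down_block Ip)) = G0.
  by case: b {Wk}; [have [-> ->] := hvalid_up_block bip 0|
                    have [-> ->] := hvalid_down_block nbr bip 0]; rewrite orient_hbip.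
rewrite sigw_flatten in Wk; exists k, b; rewrite sigma_loopE; split=> //.
- by rewrite -(orient_hbip bip 0) valid_orient.
- by rewrite -{1}(orient_hbip bip 0) endpt_orient.
Qed.

Lemma weq_R0_loop w : valid e false G0 w -> endpt G0 w = G0 -> sigma_power w.
Proof.
move=> Vw Ew; have W := weq_forget_inv Vw; rewrite (map_forget_inv_R0 Vw) in W.
suff [k [b [Wk Vb Eb]]] : sigma_power (sigw (sigs w)).
  by exists k, b; split=> //; apply: weq_trans W Wk.
have [/esym Vs /esym Es] := weq_valid_endpt W; rewrite Vw in Vs; rewrite Ew in Es.
case: (boolP [exists x, [forall y, ~~ e x y]]) => [/existsP[x /forallP iso]|noiso].
  exact: sigma_power_singleton iso.
apply: sigma_power_nbr => // x.
by move/existsPn: noiso => /(_ x)/forallPn[y]; rewrite negbK; exists y.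
Qed.

Local Notation Dl := (Dg V, false).

Lemma valid_D_Sig A i t :
  valid e true A [:: Dl, (Sig i, false) & t] = valid e true A [:: (Sig i, false), Dl & t].
Proof. by rewrite /= /ldef /= is_source_opp is_sink_opp sref_opp orbC. Qed.

Lemma valid_D_sigw A s t : valid e true A (Dl :: sigw s ++ t) = valid e true A (sigw s ++ Dl :: t).
Proof.
elim: s A => [|i s IH] A //.
by rewrite [Dl :: _]/= valid_D_Sig; apply: (congr1 (andb _) (IH (sref i A))).
Qed.

Lemma weq_D_sigw A s t : valid e true A (Dl :: sigw s ++ t) ->
  weq e true A (Dl :: sigw s ++ t) (sigw s ++ Dl :: t).
Proof.
elim: s A => [|i s IH] A Vw; first exact: weq_refl.
have Vw' : valid e true A [:: (Sig i, false), Dl & sigw s ++ t].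
  by rewrite -valid_D_Sig.
apply: (weq_trans (w2 := [:: (Sig i, false), Dl & sigw s ++ t])).
  apply/weq_sym/(weq_rel_at (u := [::]) (l := [:: (Sig i, false); Dl])
                            (r := [:: Dl; (Sig i, false)])) => //.
  by apply: R4 => //; [move: Vw'|move: Vw] => /= /andP[-> _].
apply: (weq_catl (u := [:: (Sig i, false)])) => //.
by apply: IH; case/andP: Vw'.
Qed.

Lemma weq_D_power A u d : valid e true A (u ++ nseq d Dl) ->
  weq e true A (u ++ nseq d Dl) (u ++ nseq (odd d) Dl).
Proof.
elim/ltn_ind: d => -[|[|d]] IH Vd; try exact: weq_refl.
have W2 : weq e true A (u ++ nseq d.+2 Dl) (u ++ nseq d Dl).
  by apply: (weq_rel_at (l := [:: Dl; Dl]) (r := [::]) (t := nseq d Dl)) Vd; apply: R3.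
have Vd' : valid e true A (u ++ nseq d Dl) by rewrite -(weq_valid_endpt W2).1.
by rewrite [odd _]/= negbK; apply: weq_trans W2 (IH d (leqW (ltnSn d)) Vd').
Qed.

Lemma weq_sigw_D A s1 s2 : valid e true A (sigw s1 ++ sigw s2) ->
  weq e true A (sigw s1 ++ sigw s2) ((sigw s1 ++ [:: Dl]) ++ (sigw s2 ++ [:: Dl])).
Proof.
move=> V12; have V12D : valid e true A ((sigw s1 ++ sigw s2) ++ [:: Dl; Dl] ++ [::]).
  by rewrite valid_cat V12.
have RD : rel_at e true (endpt A (sigw s1 ++ sigw s2)) [:: Dl; Dl] [::] by apply: R3.
have := weq_rel_at RD V12D; rewrite !cats0 -!catA => /weq_sym W1.
apply: weq_trans W1 _; apply: weq_sym.
have VD : valid e true (endpt A (sigw s1)) (Dl :: sigw s2 ++ [:: Dl]).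
  by rewrite valid_D_sigw; move: V12D; rewrite cats0 -catA valid_cat => /andP[].
apply: (weq_catl (v := Dl :: _)); first exact: weq_D_sigw.
by rewrite valid_cat VD andbT; move: V12; rewrite valid_cat => /andP[].
Qed.

Definition is_D (l : letter V) : bool := if l.1 is Dg then true else false.

Lemma weq_push_D A w : valid e true A w -> all (fun l : letter V => ~~ l.2) w ->
  weq e true A w (sigw (sigs w) ++ nseq (count is_D w) Dl).
Proof.
elim: w A => [|[g b] w IH] A /=; first by move=> _ _; apply: weq_refl.
case/andP=> Hl Vw /andP[/negbTE Hb Aw]; subst b.
have W : weq e true A ((g, false) :: w) ((g, false) :: sigw (sigs w) ++ nseq (count is_D w) Dl).
  by apply: (weq_catl (u := [:: (g, false)])) (IH _ Vw Aw) _; rewrite /= Hl.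
have /esym Vg := (weq_valid_endpt W).1; rewrite /= Hl Vw in Vg.
case: g Hl Vw W Vg => [i|] Hl Vw W Vg; first exact: W.
exact: weq_trans W (weq_D_sigw Vg).
Qed.

Definition gen_word (c : bool * bool) : seq (letter V) :=
  let x := if c.1 then SigmaW Ip ++ [:: Dl] else SigmaW (~: Ip) ++ [:: Dl] in
  if c.2 then winv x else x.

Definition loop_gens (b : bool) : seq (bool * bool) :=
  if b then [:: (false, false); (true, false)] else [:: (true, false); (false, false)].

Lemma weq_sigma_loop_gens A k b : valid e true A (sigma_loop b) -> endpt A (sigma_loop b) = A ->
  weq e true A (flatten (nseq k (sigma_loop b)))
               (flatten (map gen_word (flatten (nseq k (loop_gens b))))).
Proof.
move=> Vb Eb; have -> : flatten (map gen_word (flatten (nseq k (loop_gens b)))) =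
                       flatten (nseq k (flatten (map gen_word (loop_gens b)))).
  by elim: k => //= k IH; rewrite map_cat flatten_cat IH.
apply: weq_power => //.
by case: b Vb {Eb} => Vb /=; rewrite cats0; apply: weq_sigw_D.
Qed.

Lemma Gamma0_opp_rev_Ip wD : valid e wD (opp G0) (sigw (rev (enum Ip))) /\
                             endpt (opp G0) (sigw (rev (enum Ip))) = G0.
Proof.
have [Vr Er] := hvalid_rev_Ip bip.
have G := graded_hneg (graded_hbip bip 0).
by rewrite -(orient_hbip bip 0) -orient_hneg // (valid_orient e_sym e_irr) // endpt_orient // Er.
Qed.

Lemma weq_R_odd_loop s : valid e true G0 (sigw s) -> endpt G0 (sigw s) = opp G0 ->
  exists bs, weq e true G0 (sigw s ++ [:: Dl]) (flatten (map gen_word bs)).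
Proof.
(* Closing the loop with rev (enum Ip) leaves exactly Sigma_+ D to the right. *)
move=> Vs Es; set r := rev (enum Ip).
have [Vr Er] := Gamma0_opp_rev_Ip true.
have Vl : valid e false G0 (sigw (s ++ r)).
  by rewrite sigw_cat valid_cat !(valid_sigw e false true) Vs Es.
have El : endpt G0 (sigw (s ++ r)) = G0 by rewrite sigw_cat endpt_cat Es.
have [k [b [Wk Vb Eb]]] := weq_R0_loop Vl El.
exists (flatten (nseq k (loop_gens b)) ++ [:: (true, false)]).
rewrite map_cat flatten_cat /= cats0.
have [_ _ Wc] := weq_sigw_rev Vr; rewrite revK in Wc.
have C1 : weq e true G0 (sigw s ++ [::] ++ [:: Dl]) (sigw s ++ sigw (r ++ enum Ip) ++ [:: Dl]).
  by apply: weq_congr; [rewrite Es; apply: weq_sym|rewrite /= valid_cat Vs Es].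
have E3 : sigw s ++ sigw (r ++ enum Ip) ++ [:: Dl] = sigw (s ++ r) ++ (SigmaW Ip ++ [:: Dl]).
  by rewrite !sigw_cat -!catA.
rewrite E3 in C1.
have V1 : valid e true G0 (sigw (s ++ r) ++ (SigmaW Ip ++ [:: Dl])).
  by rewrite -(weq_valid_endpt C1).1 /= valid_cat Vs Es.
have C2 := weq_catr (weq_R0_R Wk) V1; have V2 := (weq_valid_endpt C2).1; rewrite V1 in V2.
apply: weq_trans C1 (weq_trans C2 (weq_catr (weq_sigma_loop_gens k (valid_R0_R Vb) Eb) _)).
by rewrite -V2.
Qed.

Lemma weq_R_loop w : valid e true G0 w -> endpt G0 w = G0 ->
  exists bs, weq e true G0 w (flatten (map gen_word bs)).
Proof.
move=> Vw Ew; have W1 := weq_forget_inv Vw; have [V1 E1] := weq_valid_endpt W1.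
have Aw : all (fun l : letter V => ~~ l.2) (map (@forget_inv V) w) by elim: (w) => //= l w' ->.
have W2 := weq_push_D (_ : valid e true G0 (map (@forget_inv V) w)) Aw.
rewrite -V1 in W2; have {}W2 := W2 Vw.
set s := sigs _ in W2; set d := count is_D _ in W2; have [V2 E2] := weq_valid_endpt W2.
have Vd : valid e true G0 (sigw s ++ nseq d Dl) by rewrite -V2 -V1.
have W3 := weq_D_power Vd; have [V3 E3] := weq_valid_endpt W3.
have W := weq_trans W1 (weq_trans W2 W3).
have Vo : valid e true G0 (sigw s ++ nseq (odd d) Dl) by rewrite -V3.
have Eo : endpt G0 (sigw s ++ nseq (odd d) Dl) = G0 by rewrite -E3 -E2 -E1.
case: (odd d) W Vo Eo => /= W Vo Eo.
  have Vs : valid e true G0 (sigw s) by move: Vo; rewrite valid_cat => /andP[].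
  have Es : endpt G0 (sigw s) = opp G0 by rewrite -[in RHS]Eo endpt_cat /= oppK.
  by have [bs Wb] := weq_R_odd_loop Vs Es; exists bs; apply: weq_trans W Wb.
rewrite cats0 (valid_sigw e true false) in W Vo Eo.
have [k [b [Wk Vb Eb]]] := weq_R0_loop Vo Eo.
exists (flatten (nseq k (loop_gens b))).
exact: weq_trans W (weq_trans (weq_R0_R Wk) (weq_sigma_loop_gens k (valid_R0_R Vb) Eb)).
Qed.

End Generators.

Theorem mainTheorem13 (V : finType) (e : rel V) (Ip : {set V}) :
  is_tree e -> is_bipartition e Ip ->
  let G0 := Gamma0 e Ip in
  let Sp := SigmaW Ip in
  let Sm := SigmaW (~: Ip) in
  (forall w, valid e false G0 w -> endpt G0 w = G0 ->
     in_gen2 e false G0 (Sm ++ Sp) (Sp ++ Sm) w) /\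
  (forall w, valid e true G0 w -> endpt G0 w = G0 ->
     in_gen2 e true G0 (Sp ++ [:: (Dg V, false)]) (Sm ++ [:: (Dg V, false)]) w).
Proof.
case=> e_sym e_irr e_conn _ bip G0 Sp Sm; split=> w Vw Ew.
  have [k [b [Wk _ _]]] := weq_R0_loop e_sym e_irr e_conn bip Vw Ew.
  by exists (nseq k (b, false)); rewrite map_nseq; case: b Wk.
by have [bs Wb] := weq_R_loop e_sym e_irr e_conn bip Vw Ew; exists bs.
Qed.
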